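(* Let $m,n\ge0$, $0\le k\le\min(m,n)$, and let $i,j$ be integers with $0\le i\le m$, $0\le j\le n$, $k\le i+j\le m+n-k$. Then $$C_{m,n,k}(i,j)=\frac{\binom{m+n-k}{m-i,\ n-j,\ i+j-k}\;c_{m,n,k}(i,j)}{\binom{m+n-k}{i,\ j,\ m+n-k-i-j}\;D(m,n,k)},\qquad D(m,n,k)=\binom{m+n-k+1}{k}\binom{m+n-2k}{m-k}.$$
   Context: Multinomial coefficients: $\binom{a+b+c}{a,\ b,\ c}=\frac{(a+b+c)!}{a!\,b!\,c!}$. Let $e,f,h$ be the standard basis of $\mathfrak{sl}(2,\mathbb{C})$. $V(n)$ is the irreducible representation of highest weight $n$ with fixed highest weight vector $\phi_n$; $\{f^i\phi_n\}_{0\le i\le n}$ is a basis, $f^{n+1}\phi_n=0$. $\mathfrak{sl}(2)$ acts on $V(m)\otimes V(n)$ by $X(v\otimes w)=Xv\otimes w+v\otimes Xw$. For $0\le k\le\min(m,n)$, $\phi_{m,n,k}=\sum_{l=0}^{k}(-1)^l\binom{m-l}{k-l}\binom{n-k+l}{l} f^l\phi_m\otimes f^{k-l}\phi_n$; it is a highest weight vector of weight $m+n-2k$ generating a copy of $V(m+n-2k)$ with basis $f^a\phi_{m,n,k}$, $0\le a\le m+n-2k$, and $V(m)\otimes V(n)$ is the direct sum of these copies. The coordinates $c_{m,n,k}(i,j)$ are defined by $f^{p-k}\phi_{m,n,k}=\sum_{i+j=p,\,0\le i\le m,\,0\le j\le n} c_{m,n,k}(i,j)\, f^i\phi_m\otimes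 f^j\phi_n$ for $k\le p\le m+n-k$. The Clebsch–Gordan coefficients $C_{m,n,k}(i,j)$ are defined by $f^i\phi_m\otimes f^j\phi_n=\sum_{k} C_{m,n,k}(i,j)\, f^{i+j-k}\phi_{m,n,k}$, sum over $0\le k\le\min(m,n)$ with $k\le i+j\le m+n-k$. *)

From HB Require Import structures.
From mathcomp Require Import all_boot all_order all_algebra.
Set Implicit Arguments. Unset Strict Implicit. Unset Printing Implicit Defensive.
Import Order.TTheory GRing.Theory Num.Theory.
Local Open Scope ring_scope.

(* Model of V(m) (x) V(n): the matrix v : 'M[R]_(m.+1, n.+1) stands for
   \sum_(i,j) v i j  f^i phi_m (x) f^j phi_n ; delta_mx i j is the basis
   vector f^i phi_m (x) f^j phi_n. *)
Section Defs.
Variable R : fieldType.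

(* action of f: f(f^i phi_m (x) f^j phi_n) = f^(i+1) phi_m (x) f^j phi_n
   + f^i phi_m (x) f^(j+1) phi_n, with f^(m+1) phi_m = 0. *)
Definition fop (m n : nat) (v : 'M[R]_(m.+1, n.+1)) : 'M[R]_(m.+1, n.+1) :=
  \matrix_(i, j) ((if (0 < i)%N then v (inord i.-1) j else 0)
                + (if (0 < j)%N then v i (inord j.-1) else 0)).

Definition fpow (m n a : nat) (v : 'M[R]_(m.+1, n.+1)) := iter a (@fop m n) v.

Definition phi (m n k : nat) : 'M[R]_(m.+1, n.+1) :=
  \matrix_(i, j) (if (i + j == k)%N
                  then (-1) ^+ i * ('C(m - i, k - i))%:R * ('C(n - k + i, i))%:R
                  else 0).

Definition cc (m n k : nat) (i : 'I_m.+1) (j : 'I_n.+1) : R :=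
  fpow (i + j - k) (phi m n k) i j.

End Defs.

Definition multinom (a b c : nat) : nat := (a + b + c)`! %/ (a`! * b`! * c`!).

Definition Dmnk (m n k : nat) : nat := 'C(m + n - k + 1, k) * 'C(m + n - 2 * k, m - k).

Definition Cformula (R : fieldType) (m n k : nat) (i : 'I_m.+1) (j : 'I_n.+1) : R :=
  ((multinom (m - i) (n - j) (i + j - k))%:R * cc R k i j)
  / ((multinom i j (m + n - k - i - j))%:R * (Dmnk m n k)%:R).

(* For p = i + j, the vectors f^(p-k) phi_{m,n,k} with k <= p <= m+n-k are
   orthogonal for the contravariant form of V(m) (x) V(n), for which the vectors
   f^a phi_m (x) f^b phi_n are orthogonal of norm a!^2 C(m,a) b!^2 C(n,b) and f is
   adjoint to e: moving the f's across the form as e's, e phi_{m,n,k} = 0 separates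
   different k.  In characteristic 0 their norms are nonzero, and there are as many
   of them as basis vectors of degree p, so they form a basis of the degree-p part.
   Hence C_{m,n,k}(i,j) is the ratio of
     <f^i phi_m (x) f^j phi_n, f^(p-k) phi_{m,n,k}>
       = c_{m,n,k}(i,j) i!^2 C(m,i) j!^2 C(n,j)
   to the norm of f^(p-k) phi_{m,n,k}, which e f^t phi_{m,n,k} =
   t (m+n-2k+1-t) f^(t-1) phi_{m,n,k} and an upper Vandermonde sum for the norm of
   phi_{m,n,k} evaluate to (p-k)!^2 C(m+n-2k, p-k) m^_k n^_k C(m+n-k+1, k). *)

From HB Require Import structures.
From mathcomp Require Import all_boot all_order all_algebra.
From mathcomp Require Import ring zify.
Import GRing.Theory.
Set Implicit Arguments. Unset Strict Implicit. Unset Printing Implicit Defensive.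

Lemma raise_phi_coef x r a b :
  (a.+1 * x.+1 * 'C(x, b) * 'C((r + a).+1, a.+1) =
   b.+1 * (r + a).+1 * 'C(x.+1, b.+1) * 'C(r + a, a))%N.
Proof.
have := mul_bin_diag x.+1 b; have := mul_bin_diag (r + a).+1 a; rewrite /= => ra xb.
have -> : (a.+1 * x.+1 * 'C(x, b) * 'C((r + a).+1, a.+1) =
           (x.+1 * 'C(x, b)) * (a.+1 * 'C((r + a).+1, a.+1)))%N by ring.
by rewrite xb -ra; ring.
Qed.

(* Vandermonde's identity for the negative upper indices -x-1 and -y-1. *)
Lemma Vandermonde_neg x y k :
  \sum_(s < k.+1) 'C(x + s, s) * 'C(y + (k - s), k - s) = 'C(x + y + k.+1, k).
Proof.
elim: y k => [|y IHy] k.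
  under eq_bigr do rewrite add0n binn muln1.
  rewrite addn0; elim: k => [|k IHk]; first by rewrite big_ord1 addn0 !bin0.
  by rewrite big_ord_recr /= IHk (addnS x k.+1) [RHS]binS addnC.
elim: k => [|k IHk]; first by rewrite big_ord_recr big_ord0 /= !bin0.
rewrite big_ord_recr /= subnn addn0 bin0 muln1.
transitivity ((\sum_(s < k.+2) 'C(x + s, s) * 'C(y + (k.+1 - s), k.+1 - s))
              + \sum_(s < k.+1) 'C(x + s, s) * 'C(y.+1 + (k - s), k - s)).
  rewrite [in RHS]big_ord_recr /= subnn addn0 bin0 muln1 addnAC; congr (_ + _).
  rewrite -big_split /=; apply: eq_bigr => s _; have := ltn_ord s => lt_s.
  rewrite (_ : k.+1 - s = (k - s).+1)%N; last by lia.
  by rewrite -mulnDr addnS binS addSnnS.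
rewrite IHk IHy (_ : x + y.+1 + k.+2 = (x + y + k.+2).+1)%N; last by lia.
by rewrite binS (_ : x + y.+1 + k.+1 = x + y + k.+2)%N //; lia.
Qed.

Lemma ffactnD x p q : x ^_ (p + q) = x ^_ p * (x - p) ^_ q.
Proof.
elim: q => [|q IH]; first by rewrite addn0 ffactn0 muln1.
by rewrite addnS !ffactnSr IH subnDA mulnA.
Qed.

Lemma ffact_split x k a : (a <= k)%N -> (x ^_ a * (x - a) ^_ (k - a) = x ^_ k)%N.
Proof. by move=> le_ak; rewrite -ffactnD subnKC. Qed.

Lemma multinom_fact a b c :
  (multinom a b c * (a`! * b`! * c`!) = (a + b + c)`!)%N.
Proof.
have := bin_fact (leq_addr (b + c) a); rewrite addKn addnA => fact_abc.
have := bin_fact (leq_addr c b); rewrite addKn => fact_bc.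
rewrite /multinom divnK // -fact_abc -fact_bc.
by apply/dvdnP; exists ('C(a + b + c, a) * 'C(b + c, b))%N; ring.
Qed.

Local Open Scope ring_scope.

Section Chain.
Variables (R : comNzRingType) (d : nat).
Implicit Types a c : 'I_d.+1.

(* f and e on the coordinates in the basis f^a phi_d of V(d):
   f (f^a phi_d) = f^(a+1) phi_d and e (f^(a+1) phi_d) = (a+1)(d-a) f^a phi_d. *)
Definition lower_mx : 'M[R]_d.+1 := \matrix_(a, c) ((a == c.+1 :> nat)%:R).
Definition raise_mx : 'M[R]_d.+1 :=
  \matrix_(a, c) ((c == a.+1 :> nat)%:R * (a.+1 * (d - a))%:R).
Definition weight_mx : 'M[R]_d.+1 := diag_mx (\row_a (d%:R - (a + a)%:R)).

Definition form_weight (a : nat) : R := (a`! * a`! * 'C(d, a))%:R.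
Definition form_mx : 'M[R]_d.+1 := diag_mx (\row_a form_weight a).

Lemma lower_mxE p (v : 'M[R]_(d.+1, p)) a b :
  (lower_mx *m v) a b = if (0 < a)%N then v (inord a.-1) b else 0.
Proof.
rewrite mxE; case: a => [[|a] lt_a] /=.
  by apply: big1 => c _; rewrite mxE mul0r.
rewrite (bigD1 (inord a)) //= mxE inordK ?eqxx ?mul1r; last exact: ltnW.
rewrite big1 ?addr0 // => c ne_c; rewrite mxE eqSS.
suff /negbTE-> : (a != c) by rewrite mul0r.
by apply: contra ne_c => /eqP->; rewrite inord_val.
Qed.

Lemma raise_mxE p (v : 'M[R]_(d.+1, p)) a b :
  (raise_mx *m v) a b = (a.+1 * (d - a))%:R * v (inord a.+1) b.
Proof.
have [lt_ad | le_da] := ltnP a d; last first.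
  have -> : (d - a = 0)%N by lia.
  rewrite muln0 mul0r mxE; apply: big1 => c _; rewrite mxE.
  suff /negbTE-> : (c != a.+1 :> nat) by rewrite !mul0r.
  by have := ltn_ord c; apply: contraTneq => ->; lia.
rewrite mxE (bigD1 (inord a.+1)) //= mxE inordK ?eqxx ?mul1r //.
rewrite big1 ?addr0 // => c ne_c; rewrite mxE.
suff /negbTE-> : (c != a.+1 :> nat) by rewrite !mul0r.
by apply: contra ne_c => /eqP<-; rewrite inord_val.
Qed.

Lemma tr_lower_form : lower_mx^T *m form_mx = form_mx *m raise_mx.
Proof.
apply/matrixP => a c; rewrite mul_mx_diag mul_diag_mx !mxE /form_weight.
have [c_eq | _] := eqVneq (c : nat) a.+1; last by rewrite !mul0r mulr0.
rewrite c_eq !mul1r -!natrM factS; congr (_%:R).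
have := mul_bin_left d a; rewrite -c_eq => bin_c.
have -> : (c * a`! * (c * a`!) * 'C(d, c) = a`! * a`! * c * (c * 'C(d, c)))%N.
  by ring.
by rewrite bin_c; ring.
Qed.

Lemma raise_lower_mx :
  raise_mx *m lower_mx = diag_mx (\row_a ((a.+1 * (d - a))%:R : R)).
Proof.
apply/matrixP => a c; have := raise_mxE lower_mx a c; rewrite !mxE => ->.
have [lt_ad | le_da] := ltnP a d; last first.
  have -> : (d - a = 0)%N by lia.
  by rewrite muln0 !mul0r mul0rn.
by rewrite inordK // eqSS mulr_natr.
Qed.

Lemma lower_raise_mx :
  lower_mx *m raise_mx = diag_mx (\row_a ((a * (d.+1 - a))%:R : R)).
Proof.
apply/matrixP => a c; have := lower_mxE raise_mx a c; rewrite !mxE => ->.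
case: (posnP a) => [a0 | a_gt0]; first by rewrite a0 /= mul0n mul0rn.
have lt_a := ltn_ord a.
rewrite inordK ?prednK; [|lia..].
by rewrite eq_sym mulr_natl; congr ((_ * _)%:R *+ _); lia.
Qed.

Lemma raise_lower_commutator :
  raise_mx *m lower_mx - lower_mx *m raise_mx = weight_mx.
Proof.
rewrite raise_lower_mx lower_raise_mx -raddfB /=; congr diag_mx.
apply/rowP => a; rewrite !mxE; apply/eqP.
rewrite subr_eq addrAC eq_sym subr_eq -!natrD; apply/eqP; congr (_%:R).
by have := ltn_ord a; nia.
Qed.

End Chain.

Lemma mulmx_trE (R : comPzRingType) p q r (v : 'M[R]_(p, q)) (A : 'M[R]_(r, q))
    a b :
  (v *m A^T) a b = (A *m v^T) b a.
Proof. by rewrite -[v *m _]trmxK trmx_mul trmxK [in LHS]mxE. Qed.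

Section Tensor.
Variables (R : fieldType) (m n : nat).
Local Notation V := 'M[R]_(m.+1, n.+1).
Implicit Types u v : V.

Definition eop v : V := raise_mx R m *m v + v *m (raise_mx R n)^T.
Definition hop v : V := weight_mx R m *m v + v *m weight_mx R n.

Definition cform u v : R :=
  \sum_(a < m.+1) \sum_(b < n.+1)
    u a b * v a b * (form_weight R m a * form_weight R n b).

Lemma fopE v : fop v = lower_mx R m *m v + v *m (lower_mx R n)^T.
Proof.
apply/matrixP => a b; rewrite [RHS]mxE mulmx_trE !lower_mxE /fop mxE.
by case: ifP => _; case: ifP => _; rewrite ?mxE.
Qed.

Lemma eop_entry v a b :
  eop v a b = (a.+1 * (m - a))%:R * v (inord a.+1) b
            + (b.+1 * (n - b))%:R * v a (inord b.+1).
Proof. by rewrite [LHS]mxE mulmx_trE !raise_mxE mxE. Qed.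

Lemma fopZ c v : fop (c *: v) = c *: fop v.
Proof. by rewrite !fopE scalerDr -scalemxAr -scalemxAl. Qed.

Lemma cform_trace u v :
  cform u v = \tr (u^T *m form_mx R m *m v *m form_mx R n).
Proof.
rewrite -mulmxA /mxtrace /cform exchange_big; apply: eq_bigr => b _.
by rewrite mxE; apply: eq_bigr => a _; rewrite !mul_mx_diag !mxE mulrACA.
Qed.

Lemma cformC u v : cform u v = cform v u.
Proof.
by apply: eq_bigr => a _; apply: eq_bigr => b _; rewrite [u a b * _]mulrC.
Qed.

Lemma cform_suml (I : finType) (P : pred I) (c : I -> R) (x : I -> V) v :
  cform (\sum_(t | P t) c t *: x t) v = \sum_(t | P t) c t * cform (x t) v.
Proof.
rewrite /cform; transitivity (\sum_a \sum_b \sum_(t | P t)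
    c t * (x t a b * v a b * (form_weight R m a * form_weight R n b))).
  apply: eq_bigr => a _; apply: eq_bigr => b _.
  by rewrite summxE !big_distrl; apply: eq_bigr => t _; rewrite /= mxE !mulrA.
under eq_bigr do rewrite exchange_big /=.
rewrite exchange_big; apply: eq_bigr => t _; rewrite big_distrr.
by apply: eq_bigr => a _; rewrite big_distrr.
Qed.

Lemma cform0r u : cform u 0 = 0.
Proof. by apply: big1 => a _; apply: big1 => b _; rewrite mxE mulr0 mul0r. Qed.

Lemma cformBl u1 u2 v : cform (u1 - u2) v = cform u1 v - cform u2 v.
Proof.
rewrite /cform -sumrB; apply: eq_bigr => a _.
by rewrite -sumrB; apply: eq_bigr => b _; rewrite !mxE /=; ring.
Qed.

Lemma cformZr c u v : cform u (c *: v) = c * cform u v.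
Proof.
rewrite /cform big_distrr; apply: eq_bigr => a _.
by rewrite big_distrr; apply: eq_bigr => b _; rewrite mxE /=; ring.
Qed.

Lemma cform_fop u v : cform (fop u) v = cform u (eop v).
Proof.
have form_tr d : (form_mx R d)^T = form_mx R d by apply: tr_diag_mx.
have form_lower d : form_mx R d *m lower_mx R d = (raise_mx R d)^T *m form_mx R d.
  by rewrite -[LHS]trmxK trmx_mul form_tr tr_lower_form trmx_mul form_tr.
rewrite !cform_trace fopE /eop linearD /= !trmx_mul trmxK.
rewrite !mulmxDl !mulmxDr !mulmxDl !mxtraceD; congr (_ + _).
  by rewrite -(mulmxA u^T _ (form_mx R m)) tr_lower_form !mulmxA.
rewrite -!mulmxA mxtrace_mulC !mulmxA.
by rewrite -(mulmxA _ (form_mx R n) (lower_mx R n)) form_lower !mulmxA.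
Qed.

Lemma eop_fop v : eop (fop v) = fop (eop v) + hop v.
Proof.
have raise_lower d :
    raise_mx R d *m lower_mx R d = lower_mx R d *m raise_mx R d + weight_mx R d.
  by rewrite -(raise_lower_commutator R d) addrC subrK.
have tr_raise_lower :
    (lower_mx R n)^T *m (raise_mx R n)^T
      = (raise_mx R n)^T *m (lower_mx R n)^T + weight_mx R n.
  by rewrite -!trmx_mul raise_lower linearD /= tr_diag_mx.
rewrite !fopE /eop /hop !mulmxDr !mulmxDl !mulmxA raise_lower.
rewrite -(mulmxA v (lower_mx R n)^T) tr_raise_lower mulmxDl mulmxDr !mulmxA.
by rewrite [LHS](AC (3*(1*2)) ((1*4)*(3*5)*(2*6))).
Qed.

Definition homog (q : nat) v :=
  forall (a : 'I_m.+1) (b : 'I_n.+1), (a + b != q)%N -> v a b = 0.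

Lemma homog_fop q v : homog q v -> homog q.+1 (fop v).
Proof.
move=> hom_v a b ab_q; rewrite /fop mxE.
have lt_a := ltn_ord a; have lt_b := ltn_ord b.
by case: ifP => a_gt0; case: ifP => b_gt0;
  rewrite ?addr0 // !hom_v ?addr0 //; rewrite inordK; lia.
Qed.

Lemma homog_fpow k t : homog (k + t) (fpow t (phi R m n k)).
Proof.
elim: t => [|t IH]; first by rewrite addn0 => a b ab_k; rewrite mxE (negbTE ab_k).
by rewrite addnS /fpow iterS; apply: homog_fop.
Qed.

Lemma hop_homog q v : homog q v -> hop v = ((m + n)%:R - (q + q)%:R) *: v.
Proof.
move=> hom_v; apply/matrixP => a b; rewrite [LHS]mxE mul_diag_mx mul_mx_diag !mxE.
have [<- | ab_q] := eqVneq (a + b)%N q; last by rewrite hom_v // !mulr0 mul0r addr0.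
by rewrite !natrD; ring.
Qed.

Lemma eop_phi k : (k <= minn m n)%N -> eop (phi R m n k) = 0.
Proof.
move=> le_k; apply/matrixP => a b; rewrite eop_entry [RHS]mxE.
have lt_a := ltn_ord a; have lt_b := ltn_ord b.
have [ab_k | ab_k] := eqVneq (a + b).+1 k; last first.
  have raise_a : (a.+1 * (m - a))%:R * phi R m n k (inord a.+1) b = 0.
    have [lt_am | ?] := ltnP a m; last first.
      by rewrite (_ : m - a = 0)%N ?muln0 ?mul0r //; lia.
    by rewrite mxE inordK // (negbTE ab_k) mulr0.
  have raise_b : (b.+1 * (n - b))%:R * phi R m n k a (inord b.+1) = 0.
    have [lt_bn | ?] := ltnP b n; last first.
      by rewrite (_ : n - b = 0)%N ?muln0 ?mul0r //; lia.
    by rewrite mxE inordK // addnS (negbTE ab_k) mulr0.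
  by rewrite raise_a raise_b addr0.
rewrite !mxE !inordK; [|lia..].
have -> : (a.+1 + b == k)%N by apply/eqP; lia.
have -> : (a + b.+1 == k)%N by apply/eqP; lia.
have -> : (m - a = (m - a.+1).+1)%N by lia.
have -> : (k - a = b.+1)%N by lia.
have -> : (k - a.+1 = b)%N by lia.
have -> : (n - b = (n - k + a).+1)%N by lia.
rewrite addnS exprS; set x := (m - a.+1)%N; set r := (n - k)%N.
transitivity ((-1) ^+ a * ((b.+1 * (r + a).+1 * 'C(x.+1, b.+1) * 'C(r + a, a))%:R
                         - (a.+1 * x.+1 * 'C(x, b) * 'C((r + a).+1, a.+1))%:R) : R).
  by rewrite !natrM; ring.
by rewrite raise_phi_coef subrr mulr0.
Qed.

End Tensor.

Section Orbit.
Variables (R : fieldType) (m n : nat).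
Local Notation V := 'M[R]_(m.+1, n.+1).

Definition raise_coef (k t : nat) : R :=
  t%:R * ((m + n)%:R - (2 * k)%:R + 1 - t%:R).

Lemma fpowS t (v : V) : fpow t.+1 v = fop (fpow t v).
Proof. exact: iterS. Qed.

Lemma eop_fpow k t : (k <= minn m n)%N ->
  eop (fpow t (phi R m n k)) = raise_coef k t *: fpow t.-1 (phi R m n k).
Proof.
move=> le_k; elim: t => [|t IH].
  by rewrite eop_phi // /raise_coef mul0r scale0r.
rewrite fpowS eop_fop IH fopZ (hop_homog (@homog_fpow R m n k t)).
have -> : raise_coef k t *: fop (fpow t.-1 (phi R m n k))
          = raise_coef k t *: fpow t (phi R m n k).
  by case: t {IH} => [|t]; rewrite ?fpowS // /raise_coef mul0r !scale0r.
by rewrite -scalerDl; congr (_ *: _); rewrite /raise_coef !natrD ?natrM; ring.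
Qed.

(* Move the f's across the form as e's; after b+1 steps e kills phi_{m,n,k}. *)
Lemma cform_fpow_lt (u : V) k a b : (k <= minn m n)%N -> (b < a)%N ->
  cform (fpow a u) (fpow b (phi R m n k)) = 0.
Proof.
move=> le_k; elim: b a => [|b IH] [|a] // lt_ba.
  by rewrite fpowS cform_fop eop_phi // cform0r.
by rewrite fpowS cform_fop eop_fpow // cformZr IH // mulr0.
Qed.

Lemma prod_raise_coef k a : (a <= m + n - 2 * k)%N -> (2 * k <= m + n)%N ->
  \prod_(t < a) raise_coef k t.+1 = (a`! * 'C(m + n - 2 * k, a) * a`!)%:R.
Proof.
move=> le_a le_k; set M := (m + n - 2 * k)%N.
elim: a le_a => [|a IH] le_a; first by rewrite big_ord0 fact0 bin0.
rewrite big_ord_recr /= IH; last by lia.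
have -> : raise_coef k a.+1 = (a.+1 * (M - a))%:R.
  rewrite /raise_coef [RHS]natrM (natrB _ (_ : a <= M)%N) /M ?natrB; [|lia..].
  by rewrite !natrD; ring.
rewrite -natrM factS; congr (_%:R).
have -> : (a.+1 * a`! * 'C(M, a.+1) * (a.+1 * a`!)
           = a`! * (a.+1 * 'C(M, a.+1)) * (a.+1 * a`!))%N by ring.
by rewrite mul_bin_left; ring.
Qed.

Lemma cform_fpow_phi k a : (k <= minn m n)%N -> (a <= m + n - 2 * k)%N ->
  cform (fpow a (phi R m n k)) (fpow a (phi R m n k)) =
  (a`! * 'C(m + n - 2 * k, a) * a`!)%:R * cform (phi R m n k) (phi R m n k).
Proof.
move=> le_k le_a; rewrite -prod_raise_coef //; last by lia.
elim: a le_a => [|a IH] le_a; first by rewrite big_ord0 mul1r.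
rewrite {1}fpowS cform_fop eop_fpow // cformZr /= IH; last by lia.
by rewrite big_ord_recr /= mulrCA mulrA.
Qed.

End Orbit.

Lemma sum_antidiag (V : nmodType) m n k (F : 'I_m.+1 -> 'I_n.+1 -> V) :
  (k <= minn m n)%N ->
  \sum_(a < m.+1) \sum_(b < n.+1) (if (a + b == k)%N then F a b else 0) =
  \sum_(a < k.+1) F (inord a) (inord (k - a)).
Proof.
move=> le_k.
have row_sum (a : 'I_m.+1) : \sum_(b < n.+1) (if (a + b == k)%N then F a b else 0)
    = if (a <= k)%N then F (inord a) (inord (k - a)) else 0.
  case: ifP => le_ak; last by apply: big1 => b _; case: eqP => //; lia.
  rewrite (bigD1 (inord (k - a))) //= inordK; last by lia.
  rewrite (_ : a + (k - a) == k)%N; last by apply/eqP; lia.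
  rewrite inord_val big1 ?addr0 // => b ne_b; case: eqP => // ab_k.
  by case/eqP: ne_b; apply/val_inj; rewrite /= inordK; lia.
under eq_bigr do rewrite row_sum.
rewrite (big_ord_widen m.+1 (fun a : nat => F (inord a) (inord (k - a)))).
  by rewrite [RHS]big_mkcond.
lia.
Qed.

Section PhiNorm.
Variables (R : fieldType) (m n k : nat).
Hypothesis le_k : (k <= minn m n)%N.

Lemma cform_phi :
  cform (phi R m n k) (phi R m n k) = (m ^_ k * n ^_ k * 'C(m + n - k + 1, k))%:R.
Proof.
have le_km : (k <= m)%N by lia.
have le_kn : (k <= n)%N by lia.
have if_sq (c : bool) (x w : R) :
    (if c then x else 0) * (if c then x else 0) * w = if c then x * x * w else 0.
  by case: c; rewrite ?mul0r.
rewrite /cform; under eq_bigr do under eq_bigr do rewrite !mxE if_sq.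
rewrite sum_antidiag // (eq_bigr (fun a : 'I_k.+1 => (m ^_ k * n ^_ k)%:R *
    ('C(n - k + a, a) * 'C(m - k + (k - a), k - a))%:R)).
  rewrite -big_distrr -natr_sum /= Vandermonde_neg -natrM.
  by congr (_%:R); congr (_ * 'C(_, _))%N; lia.
move=> a _; have lt_a := ltn_ord a; rewrite !inordK; [|lia..].
rewrite (_ : m - k + (k - a) = m - a)%N; last by lia.
set C1 := 'C(m - a, k - a); set C2 := 'C(n - k + a, a).
have ffact_m : (C1 * (k - a)`! * ('C(m, a) * a`!) = m ^_ k)%N.
  by rewrite !bin_ffact mulnC ffact_split //; lia.
have ffact_n : (C2 * a`! * ('C(n, k - a) * (k - a)`!) = n ^_ k)%N.
  rewrite !bin_ffact mulnC -(ffact_split n (_ : k - a <= k)%N) ?leq_subr //.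
  by rewrite (_ : n - (k - a) = n - k + a)%N ?subKn //; lia.
rewrite -ffact_m -ffact_n /form_weight; set s := (-1) ^+ a : R.
transitivity ((s * s) * ((C1 * (k - a)`! * ('C(m, a) * a`!))
             * (C2 * a`! * ('C(n, k - a) * (k - a)`!)) * (C2 * C1))%:R).
  by rewrite !natrM; ring.
by rewrite -exprMn mulrNN mulr1 expr1n mul1r -natrM.
Qed.

End PhiNorm.

Definition orbit_norm (m n k t : nat) : nat :=
  t`! * 'C(m + n - 2 * k, t) * t`! * (m ^_ k * n ^_ k * 'C(m + n - k + 1, k)).

Lemma cform_orbit (R : fieldType) m n k t :
  (k <= minn m n)%N -> (t <= m + n - 2 * k)%N ->
  cform (fpow t (phi R m n k)) (fpow t (phi R m n k)) = (orbit_norm m n k t)%:R.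
Proof. by move=> le_k le_t; rewrite cform_fpow_phi // cform_phi // -natrM. Qed.

Lemma orbit_norm_gt0 m n k t :
  (k <= minn m n)%N -> (t <= m + n - 2 * k)%N -> (0 < orbit_norm m n k t)%N.
Proof.
by move=> le_k le_t; rewrite !muln_gt0 !fact_gt0 !ffact_gt0 !bin_gt0; lia.
Qed.

Section Formula.
Variable R : fieldType.
Hypothesis char_R : [pchar R] =i pred0.

Lemma natr_fact_neq0 x : (x`!)%:R != 0 :> R.
Proof. by rewrite (proj1 (pcharf0P R) char_R) -lt0n fact_gt0. Qed.

Lemma natr_bin x y : (y <= x)%N ->
  'C(x, y)%:R = (x`!)%:R / ((y`!)%:R * ((x - y)`!)%:R) :> R.
Proof.
move=> le_yx; rewrite -(bin_fact le_yx) !natrM mulfK //.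
by rewrite mulf_neq0 // natr_fact_neq0.
Qed.

Lemma natr_ffact x y : (y <= x)%N -> (x ^_ y)%:R = (x`!)%:R / ((x - y)`!)%:R :> R.
Proof.
by move=> le_yx; rewrite -(ffact_fact le_yx) natrM mulfK // natr_fact_neq0.
Qed.

Lemma natr_multinom a b c : (multinom a b c)%:R =
  ((a + b + c)`!)%:R / ((a`!)%:R * (b`!)%:R * (c`!)%:R) :> R.
Proof.
rewrite -multinom_fact !natrM mulfK //.
by rewrite !mulf_neq0 // natr_fact_neq0.
Qed.

Lemma Cformula_norm m n k (i : 'I_m.+1) (j : 'I_n.+1) :
  (k <= minn m n)%N -> (k <= i + j <= m + n - k)%N ->
  Cformula R k i j * (orbit_norm m n k (i + j - k))%:R =
  cc R k i j * (form_weight R m i * form_weight R n j).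
Proof.
move=> le_k /andP[le_kp le_pk]; have lt_i := ltn_ord i; have lt_j := ltn_ord j.
rewrite /Cformula /orbit_norm /Dmnk /form_weight; move: (cc R k i j) => c.
rewrite !natrM !natr_multinom !natr_ffact; [|lia..].
rewrite !natr_bin; [|lia..].
rewrite (_ : m - i + (n - j) + (i + j - k) = m + n - k)%N; last by lia.
rewrite (_ : i + j + (m + n - k - i - j) = m + n - k)%N; last by lia.
rewrite (_ : m + n - 2 * k - (i + j - k) = m + n - k - i - j)%N; last by lia.
rewrite (_ : m + n - 2 * k - (m - k) = n - k)%N; last by lia.
by field; rewrite !natr_fact_neq0.
Qed.

End Formula.

Section OrthogonalFamily.
Variables (R : fieldType) (m n : nat) (X : seq 'M[R]_(m.+1, n.+1)).
Hypothesis X_orth : forall s t, (s < size X)%N -> (t < size X)%N -> s != t ->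
  cform X`_s X`_t = 0.
Hypothesis X_norm : forall s, (s < size X)%N -> cform X`_s X`_s != 0.

Lemma cform_sum_orth (c : 'I_(size X) -> R) (s : 'I_(size X)) :
  cform (\sum_t c t *: X`_t) X`_s = c s * cform X`_s X`_s.
Proof.
rewrite cform_suml (bigD1 s) //= big1 ?addr0 // => t ne_ts.
by rewrite X_orth ?mulr0.
Qed.

Lemma orth_coef_eq0 (c : 'I_(size X) -> R) (s : 'I_(size X)) :
  cform (\sum_t c t *: X`_t) X`_s = 0 -> c s = 0.
Proof.
rewrite cform_sum_orth => /eqP.
by rewrite mulf_eq0 (negbTE (X_norm (ltn_ord s))) orbF => /eqP.
Qed.

Lemma orthogonal_free : free X.
Proof.
rewrite -[X]/(tval (in_tuple X)); apply/freeP => c c0 s.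
by apply: orth_coef_eq0; rewrite c0 cformC cform0r.
Qed.

Lemma orthogonal_span_eq0 u : u \in <<X>>%VS ->
  (forall s, (s < size X)%N -> cform u X`_s = 0) -> u = 0.
Proof.
move=> X_u u_orth; set c := fun t => coord (in_tuple X) t u.
have u_sum : u = \sum_t c t *: X`_t := @coord_span _ _ _ (in_tuple X) u X_u.
rewrite u_sum; apply: big1 => s _.
by rewrite (orth_coef_eq0 (c := c) (s := s)) ?scale0r // -u_sum u_orth.
Qed.

End OrthogonalFamily.

Section Decomposition.
Variables (R : fieldType) (m n : nat) (i : 'I_m.+1) (j : 'I_n.+1).
Hypothesis char_R : [pchar R] =i pred0.
Local Notation V := 'M[R]_(m.+1, n.+1).
Local Notation p := (i + j)%N.

Definition orbit k : V := fpow (p - k) (phi R m n k).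
Definition admissible k := (k <= p <= m + n - k)%N.
Definition admissibles := [seq k <- iota 0 (minn m n).+1 | admissible k].
Definition orbits := map orbit admissibles.

Lemma cform_delta v :
  cform (delta_mx i j) v = v i j * (form_weight R m i * form_weight R n j).
Proof.
rewrite /cform (bigD1 i) //= (bigD1 j) //= mxE !eqxx mul1r.
rewrite big1 ?addr0 => [|b ne_b]; last by rewrite mxE eqxx (negbTE ne_b) !mul0r.
rewrite big1 ?addr0 // => a ne_a; apply: big1 => b _.
by rewrite mxE (negbTE ne_a) !mul0r.
Qed.

Lemma cform_orbit_orth k s : (k <= minn m n)%N -> (s <= minn m n)%N ->
  admissible k -> admissible s -> k != s -> cform (orbit k) (orbit s) = 0.
Proof.
move=> le_k le_s /andP[le_kp _] /andP[le_sp _]; case: ltngtP => // lt_ks _.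
  by apply: cform_fpow_lt => //; lia.
by rewrite cformC; apply: cform_fpow_lt => //; lia.
Qed.

Lemma cform_orbit_neq0 k : (k <= minn m n)%N -> admissible k ->
  cform (orbit k) (orbit k) != 0.
Proof.
move=> le_k /andP[le_kp le_pk]; rewrite cform_orbit //; last by lia.
by rewrite (proj1 (pcharf0P R) char_R) -lt0n orbit_norm_gt0 //; lia.
Qed.

Lemma cform_orbit_sum (c : nat -> R) s : (s <= minn m n)%N -> admissible s ->
  cform (\sum_(k < (minn m n).+1 | admissible k) c k *: orbit k) (orbit s)
  = c s * cform (orbit s) (orbit s).
Proof.
move=> le_s adm_s; rewrite cform_suml (bigD1 (inord s)) /= ?inordK //.
rewrite big1 ?addr0 // => k /andP[adm_k ne_ks]; rewrite cform_orbit_orth ?mulr0 //.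
  by rewrite -ltnS.
by apply: contra ne_ks => /eqP ks; apply/eqP/val_inj; rewrite /= inordK.
Qed.

Lemma cform_delta_orbit k : (k <= minn m n)%N -> admissible k ->
  cform (delta_mx i j) (orbit k) = Cformula R k i j * cform (orbit k) (orbit k).
Proof.
move=> le_k adm_k; rewrite cform_delta cform_orbit // ?Cformula_norm //.
by case/andP: adm_k; lia.
Qed.

Lemma Cformula_unique (c : nat -> R) :
  delta_mx i j = \sum_(k < (minn m n).+1 | admissible k) c k *: orbit k ->
  forall k, (k <= minn m n)%N -> admissible k -> c k = Cformula R k i j.
Proof.
move=> delta_sum k le_k adm_k; apply: (mulIf (cform_orbit_neq0 le_k adm_k)).
by rewrite -cform_orbit_sum // -delta_sum cform_delta_orbit.
Qed.

Lemma nth_admissibles t : (t < size admissibles)%N ->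
  (nth 0%N admissibles t <= minn m n)%N && admissible (nth 0%N admissibles t).
Proof.
move=> lt_t; have := mem_nth 0%N lt_t.
by rewrite mem_filter mem_iota ltnS => /andP[-> /andP[_ ->]].
Qed.

Lemma orbits_orth s t : (s < size orbits)%N -> (t < size orbits)%N -> s != t ->
  cform orbits`_s orbits`_t = 0.
Proof.
rewrite size_map => lt_s lt_t ne_st; rewrite !(nth_map 0%N) //.
have /andP[le_s adm_s] := nth_admissibles lt_s.
have /andP[le_t adm_t] := nth_admissibles lt_t.
apply: cform_orbit_orth => //.
by rewrite nth_uniq // filter_uniq // iota_uniq.
Qed.

Lemma orbits_norm s : (s < size orbits)%N -> cform orbits`_s orbits`_s != 0.
Proof.
rewrite size_map => lt_s; rewrite (nth_map 0%N) //.
by have /andP[] := nth_admissibles lt_s; apply: cform_orbit_neq0.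
Qed.

Definition degree_basis : seq V :=
  [seq delta_mx (inord a) (inord (p - a))
     | a <- iota (p - n) ((minn m p).+1 - (p - n))].

Lemma homog_in_degree_basis v : homog p v -> v \in <<degree_basis>>%VS.
Proof.
move=> hom_v; rewrite [v]matrix_sum_delta; apply: memv_suml => a _.
apply: memv_suml => b _; have lt_a := ltn_ord a; have lt_b := ltn_ord b.
have [ab_p | ab_p] := eqVneq (a + b)%N p; last by rewrite hom_v // scale0r mem0v.
apply/memvZ/memv_span/mapP; exists (a : nat); first by rewrite mem_iota; lia.
by congr delta_mx; apply/val_inj; rewrite /= inordK //; lia.
Qed.

Lemma orbits_sub_degree : (<<orbits>> <= <<degree_basis>>)%VS.
Proof.
apply/span_subvP => _ /mapP[k adm_k ->]; apply: homog_in_degree_basis.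
move: adm_k; rewrite mem_filter => /andP[/andP[le_kp _] _].
by have := @homog_fpow R m n k (p - k); rewrite subnKC.
Qed.

(* Both sizes are min(m, n, p, m+n-p) + 1. *)
Lemma size_degree_basis : (size degree_basis <= size orbits)%N.
Proof.
rewrite !size_map size_iota size_filter.
have lt_i := ltn_ord i; have lt_j := ltn_ord j.
set d := minn (minn m n) (minn p (m + n - p)).
rewrite (_ : (minn m n).+1 = d.+1 + (minn m n - d))%N; last by lia.
rewrite iotaD count_cat.
rewrite (@eq_in_count _ _ predT) ?count_predT ?size_iota; first by rewrite /d; lia.
by move=> k; rewrite mem_iota /admissible /d => lt_k; apply/andP; split; lia.
Qed.

Lemma delta_in_orbits : delta_mx i j \in <<orbits>>%VS.
Proof.
have -> : <<orbits>>%VS = <<degree_basis>>%VS.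
  apply/eqP; rewrite eqEdim orbits_sub_degree.
  rewrite (eqP (orthogonal_free orbits_orth orbits_norm)).
  exact: leq_trans (dim_span _) size_degree_basis.
apply: homog_in_degree_basis => a b ab_p; rewrite mxE.
case: (eqVneq a i) => [ai|]; case: (eqVneq b j) => [bj|] //.
by rewrite ai bj eqxx in ab_p.
Qed.

Lemma delta_decomposition :
  delta_mx i j =
  \sum_(k < (minn m n).+1 | admissible k) Cformula R k i j *: orbit k.
Proof.
apply/eqP; rewrite -subr_eq0; apply/eqP.
apply: (orthogonal_span_eq0 orbits_orth orbits_norm).
  rewrite memvB ?delta_in_orbits //; apply: memv_suml => k adm_k.
  by apply/memvZ/memv_span/map_f; rewrite mem_filter adm_k mem_iota /=.
move=> s; rewrite size_map => lt_s; rewrite (nth_map 0%N) //.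
have /andP[le_s adm_s] := nth_admissibles lt_s.
rewrite cformBl cform_delta_orbit //.
by rewrite (cform_orbit_sum (fun k => Cformula R k i j)) // subrr.
Qed.

End Decomposition.

Unset Implicit Arguments.

Theorem corollary8p5 (R : fieldType) (HR : [pchar R] =i pred0)
    (m n : nat) (i : 'I_m.+1) (j : 'I_n.+1) :
  (delta_mx i j = \sum_(k < (minn m n).+1 | (k <= i + j <= m + n - k)%N)
                    Cformula R k i j *: fpow (i + j - k) (phi R m n k))
  /\
  (forall C : nat -> R,
     delta_mx i j = \sum_(k < (minn m n).+1 | (k <= i + j <= m + n - k)%N)
                      C k *: fpow (i + j - k) (phi R m n k) ->
     forall k : nat, (k <= minn m n)%N -> (k <= i + j <= m + n - k)%N ->
       C k = Cformula R k i j).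
Proof.
split; first exact: delta_decomposition.
exact: Cformula_unique.
Qed.
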